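(* Let $B$ be an irreducible $n\times n$ $\mathrm{SDDM}_0$-matrix whose upper-triangular part contains exactly $n-1+j$ non-zero off-diagonal entries (so $B$ has $2(n-1+j)$ non-zero off-diagonal entries), and let $A_1$ (of dimension $n_1$) be obtained from $B$ by the elimination process described in the context. Then: (a) if $n_1\ge1$, $A_1$ is an irreducible $\mathrm{SDDM}_0$-matrix, and $A_1$ is singular if and only if $B$ is singular; (b) if the graph of non-zero entries of $B$ is planar, then so is that of $A_1$; (c) if $n_1\ge1$, then $n_1\le 2j-2$ and $A_1$ has at most $2(3j-3)$ non-zero off-diagonal entries.
   Context: A matrix is $\mathrm{SDDM}_0$ if it is real, symmetric, weakly diagonally dominant and has non-positive off-diagonal entries; irreducible means its graph of non-zero entries is connected, where the graph of non-zero entries of a symmetric matrix $M$ has vertex set the indices and an edge $\{i,j\}$ ($i\neq j$) iff $M_{ij}\neq0$. Elimination process: starting with the current matrix $M=B$, as long as some index $i$ has at most two non-zero off-diagonal entries in its row of $M$, eliminate it: if $M$ has dimension at least $2$, replace $M$ by the Schur complement of $M$ with respect to the diagonal entry $M_{ii}$ (i.e. remove row and column $i$ and subtract $M_{\cdot i}M_{i\cdot}/M_{ii}$ from the rest); if $M$ has dimension $1$, delete it (leaving an empty matrix, $n_1=0$). The process stops when every row of $M$ has at least three non-zero off-diagonal entries; $A_1$ is the final matrix. *)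

From HB Require Import structures.
From mathcomp Require Import all_boot all_order all_algebra.
From mathcomp Require Import all_classical all_reals all_analysis.
From Stdlib Require Import Relation_Operators.
Set Implicit Arguments.
Unset Strict Implicit.
Unset Printing Implicit Defensive.
Import Order.TTheory GRing.Theory Num.Theory.
Import numFieldNormedType.Exports.
Local Open Scope ring_scope.

Section Defs.
Variable R : realType.

Definition nzgraph n (M : 'M[R]_n) : rel 'I_n :=
  fun i j => (i != j) && (M i j != 0).

Definition irreducible n (M : 'M[R]_n) : Prop :=
  forall i j : 'I_n, connect (nzgraph M) i j.

Definition SDDM0 n (M : 'M[R]_n) : Prop :=
  [/\ M^T = M,
      (forall i : 'I_n, \sum_(j < n | j != i) `|M i j| <= M i i)
    & (forall i j : 'I_n, i != j -> M i j <= 0)].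

Definition singular n (M : 'M[R]_n) : Prop := \det M = 0.

Definition nnz_upper n (M : 'M[R]_n) : nat :=
  #|[set p : 'I_n * 'I_n | (p.1 < p.2)%N && (M p.1 p.2 != 0)]|.

Definition nnz_offdiag n (M : 'M[R]_n) : nat :=
  #|[set p : 'I_n * 'I_n | (p.1 != p.2) && (M p.1 p.2 != 0)]|.

Definition row_offdeg n (M : 'M[R]_n) (i : 'I_n) : nat :=
  #|[set j : 'I_n | (j != i) && (M i j != 0)]|.

(* Schur complement of M w.r.t. the diagonal entry M i i: remove row and
   column i and subtract M_{.i} M_{i.} / M_{ii}.  For n = 0 (M of dimension 1)
   this is the empty matrix, i.e. deleting M. *)
Definition schur_del n (M : 'M[R]_n.+1) (i : 'I_n.+1) : 'M[R]_n :=
  \matrix_(k, l) (M (lift i k) (lift i l)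
                  - M (lift i k) i * M i (lift i l) / M i i).

Definition smat := {n : nat & 'M[R]_n}.

Inductive elim_step : smat -> smat -> Prop :=
| ElimStep n (M : 'M[R]_n.+1) (i : 'I_n.+1) :
    (row_offdeg M i <= 2)%N ->
    elim_step (existT _ n.+1 M) (existT _ n (schur_del M i)).

Definition elim_final n (M : 'M[R]_n) : Prop :=
  forall i : 'I_n, (3 <= row_offdeg M i)%N.

Definition elim_result n (B : 'M[R]_n) n1 (A1 : 'M[R]_n1) : Prop :=
  clos_refl_trans smat elim_step (existT _ n B) (existT _ n1 A1)
  /\ elim_final A1.

Definition unit_itv : set R := fun t => 0 <= t <= 1.

(* planarity of a (symmetric, irreflexive) graph on a finite vertex type:
   vertices are drawn as distinct points of the plane R x R, each edge as a
   simple continuous arc joining its endpoints, avoiding other vertices, and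
   arcs of distinct edges meet only at common endpoints. *)
Definition planar (V : finType) (e : rel V) : Prop :=
  exists (pos : V -> R * R) (arc : V -> V -> R -> R * R),
    injective pos /\
    (forall u v, e u v ->
       [/\ {within unit_itv, continuous (arc u v)}%classic,
           arc u v 0 = pos u, arc u v 1 = pos v,
           (forall s t, unit_itv s -> unit_itv t ->
              arc u v s = arc u v t -> s = t)
         & (forall w t, 0 < t < 1 -> arc u v t != pos w)]) /\
    (forall u v u' v', e u v -> e u' v' ->
       ~ ((u = u' /\ v = v') \/ (u = v' /\ v = u')) ->
       forall s t, unit_itv s -> unit_itv t -> arc u v s = arc u' v' t ->
         (s == 0) || (s == 1)).

End Defs.

(* Eliminating a row v with at most two off-diagonal non-zeros is one step of
   Gaussian elimination: det B = B_vv * det (Schur complement), and B_vv > 0 by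
   weak diagonal dominance, since irreducibility gives row v a non-zero
   off-diagonal entry.  The Schur complement of an SDDM_0 matrix is again SDDM_0, and
   its graph is the elimination graph: v is deleted and its (at most two)
   neighbours are joined.  This keeps the graph connected, and planar, since the
   new edge can be drawn along the two old edges through v.  Each step removes at
   least two off-diagonal non-zeros (d(d - 1) - 2d <= -2 for degree d in {1, 2}),
   while in the final matrix every row has at least three, so
   3 n1 <= nnz(A1) <= 2(n - 1 + j) - 2(n - n1), which gives (c). *)

From mathcomp Require Import all_boot all_order all_algebra.
From mathcomp Require Import all_classical all_reals all_analysis.
From mathcomp Require Import ring lra zify.
From Stdlib Require Import Relation_Operators.
Import Order.TTheory GRing.Theory Num.Theory.
Import numFieldNormedType.Exports.
Set Implicit Arguments.
Unset Strict Implicit.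
Unset Printing Implicit Defensive.
Local Open Scope ring_scope.

Section PathConcatenation.
Variable R : realType.
Implicit Types s t : R.
Local Open Scope classical_set_scope.

Lemma comp_within_continuous (U : topologicalType) (A B : set R)
    (g : R -> U) (p : R -> R) :
  {within B, continuous g} -> continuous p ->
  (forall x, A x -> B (p x)) -> {within A, continuous (g \o p)}.
Proof.
move=> cg cp AB; have /subspace_continuousP {}cg := cg.
apply/subspace_continuousP => x Ax.
apply: (@cvg_comp _ _ _ p g _ (within B (nbhs (p x)))); last exact: cg _ (AB x Ax).
move=> W; rewrite /within /= => /(cp x); rewrite nbhs_simpl /=.
by apply: filterS => y /= W_py Ay; exact: W_py (AB y Ay).
Qed.

Definition path_cat (U : Type) (f g : R -> U) t : U :=
  if t <= 2^-1 then f (2 * t) else g (2 * t - 1).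

Lemma unit_itv_double t : unit_itv t -> t <= 2^-1 -> unit_itv (2 * t).
Proof. by move=> /andP[t0 t1] t2; apply/andP; split; lra. Qed.

Lemma unit_itv_double_sub1 t : unit_itv t -> 2^-1 < t -> unit_itv (2 * t - 1).
Proof. by move=> /andP[t0 t1] t2; apply/andP; split; lra. Qed.

Lemma path_cat0 (U : Type) (f g : R -> U) : path_cat f g 0 = f 0.
Proof. by rewrite /path_cat ifT ?mulr0 // invr_ge0 ler0n. Qed.

Lemma path_cat1 (U : Type) (f g : R -> U) : path_cat f g 1 = g 1.
Proof.
rewrite /path_cat ifF; first by congr g; lra.
by apply/negbTE; rewrite -ltNge; lra.
Qed.

Lemma path_cat_continuous (U : topologicalType) (f g : R -> U) :
  {within @unit_itv R, continuous f} ->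
  {within @unit_itv R, continuous g} ->
  f 1 = g 0 -> {within @unit_itv R, continuous (path_cat f g)}.
Proof.
move=> cf cg fg.
have -> : @unit_itv R = `[0, 2^-1] `|` `[2^-1, 1].
  apply/seteqP; split => t /=.
    move=> /andP[t0 t1]; case: (lerP t 2^-1) => t2; [left|right];
      by rewrite /= in_itv /=; apply/andP; split; lra.
  by rewrite !in_itv /= => -[] /andP[t0 t1]; apply/andP; split; lra.
apply: withinU_continuous; [exact: itv_closed | exact: itv_closed | |].
- apply: (@subspace_eq_continuous _ _ _ (f \o *%R 2)).
    by move=> t; rewrite inE /= in_itv /= /path_cat /from_subspace => /andP[_ ->].
  apply: comp_within_continuous cf _ _; first exact: mulrl_continuous.
  by move=> t; rewrite /= in_itv /= => /andP[t0 t1]; apply/andP; split; lra.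
- apply: (@subspace_eq_continuous _ _ _ (g \o fun t => 2 * t - 1)).
    move=> t; rewrite inE /= in_itv /= /path_cat /from_subspace => /andP[t0 t1].
    case: ifP => // t2; have -> : t = 2^-1 by apply/eqP; rewrite eq_le t2 t0.
    by rewrite mulfV // subrr -fg.
  apply: comp_within_continuous cg _ _.
    by move=> x; apply: continuousB; [exact: mulrl_continuous | exact: cst_continuous].
  by move=> t; rewrite /= in_itv /= => /andP[t0 t1]; apply/andP; split; lra.
Qed.

Lemma path_cat_inj (U : Type) (f g : R -> U) :
  (forall s t, unit_itv s -> unit_itv t -> f s = f t -> s = t) ->
  (forall s t, unit_itv s -> unit_itv t -> g s = g t -> s = t) ->
  (forall s t, unit_itv s -> unit_itv t -> f s = g t -> t = 0) ->
  forall s t, unit_itv s -> unit_itv t -> path_cat f g s = path_cat f g t -> s = t.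
Proof.
move=> f_inj g_inj fg s t Is It; rewrite /path_cat.
case: (lerP s 2^-1) => s2; case: (lerP t 2^-1) => t2 fgst.
- by have := f_inj _ _ (unit_itv_double Is s2) (unit_itv_double It t2) fgst; lra.
- by have := fg _ _ (unit_itv_double Is s2) (unit_itv_double_sub1 It t2) fgst; lra.
- by have := fg _ _ (unit_itv_double It t2) (unit_itv_double_sub1 Is s2) (esym fgst); lra.
- by have := g_inj _ _ (unit_itv_double_sub1 Is s2) (unit_itv_double_sub1 It t2) fgst; lra.
Qed.

End PathConcatenation.

Definition elim_graph n (g : rel 'I_n.+1) (w : 'I_n.+1) : rel 'I_n :=
  fun a b => (a != b) &&
    (g (lift w a) (lift w b) || g (lift w a) w && g w (lift w b)).

Lemma card_le2_mem (T : finType) (A : {set T}) x y z :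
  (#|A| <= 2)%N -> x != y -> x \in A -> y \in A -> z \in A ->
  (z == x) || (z == y).
Proof.
move=> A2 xy xA yA zA; apply: contraLR A2 => /norP[zx zy]; rewrite -ltnNge.
have <- : #|z |: [set x; y]| = 3%N by rewrite cardsU1 cards2 xy !inE negb_or zx zy.
by apply/subset_leq_card/fintype.subsetP => u; rewrite !inE => /or3P[]/eqP->.
Qed.

Section PlanarElimGraph.
Variables (R : realType) (n : nat) (e : rel 'I_n.+1) (w : 'I_n.+1).
Hypotheses (e_sym : symmetric e) (deg_w : (#|[set x | e w x]| <= 2)%N).
Local Notation L := (lift w).

Lemma lift_neq a : L a != w.
Proof. by rewrite eq_sym neq_lift. Qed.

Section Drawing.
Variables (pos : 'I_n.+1 -> R * R) (arc : 'I_n.+1 -> 'I_n.+1 -> R -> R * R).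
Hypothesis pos_inj : injective pos.
Hypothesis arcP : forall u v, e u v ->
  [/\ {within @unit_itv R, continuous (arc u v)}%classic,
      arc u v 0 = pos u, arc u v 1 = pos v,
      (forall s t, unit_itv s -> unit_itv t -> arc u v s = arc u v t -> s = t)
    & (forall x t, 0 < t < 1 -> arc u v t != pos x)].
Hypothesis arc_disjoint : forall u v u' v', e u v -> e u' v' ->
  ~ ((u = u' /\ v = v') \/ (u = v' /\ v = u')) ->
  forall s t, unit_itv s -> unit_itv t -> arc u v s = arc u' v' t ->
  (s == 0) || (s == 1).

Lemma arc_at_vertex u v x t : e u v -> unit_itv t -> arc u v t = pos x ->
  (t = 0 /\ x = u) \/ (t = 1 /\ x = v).
Proof.
move=> euv /andP[t0 t1] tx; have [_ a0 a1 _ a_avoid] := arcP euv.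
have [t_0|tn0] := eqVneq t 0.
  by left; split=> //; apply: pos_inj; rewrite -tx t_0 a0.
have [t_1|tn1] := eqVneq t 1.
  by right; split=> //; apply: pos_inj; rewrite -tx t_1 a1.
have : 0 < t < 1 by rewrite !lt_def tn0 t0 eq_sym tn1 t1.
by move/(a_avoid x); rewrite tx eqxx.
Qed.

Definition detour_arc a b := path_cat (arc (L a) w) (arc w (L b)).

Lemma detour_arc_simple a b : e (L a) w -> e w (L b) -> a != b ->
  [/\ {within @unit_itv R, continuous (detour_arc a b)}%classic,
      detour_arc a b 0 = pos (L a), detour_arc a b 1 = pos (L b),
      (forall s t, unit_itv s -> unit_itv t ->
         detour_arc a b s = detour_arc a b t -> s = t)
    & (forall x t, 0 < t < 1 -> detour_arc a b t != pos (L x))].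
Proof.
move=> e_aw e_wb ab.
have [c1 a1_0 a1_1 a1_inj a1_avoid] := arcP e_aw.
have [c2 a2_0 a2_1 a2_inj a2_avoid] := arcP e_wb.
split; rewrite /detour_arc ?path_cat0 ?path_cat1 //.
- by apply: path_cat_continuous; rewrite ?a1_1 ?a2_0.
- apply: path_cat_inj => // s t Is It st.
  have ne : ~ ((L a = w /\ w = L b) \/ (L a = L b /\ w = w)).
    by case=> -[/eqP]; rewrite ?(negbTE (lift_neq a)) ?(inj_eq lift_inj) ?(negbTE ab).
  case/orP: (arc_disjoint e_aw e_wb ne Is It st) => /eqP s01; move: st.
  + rewrite s01 a1_0 => /esym/(arc_at_vertex e_wb It) [[]//|[_ /eqP]].
    by rewrite (inj_eq lift_inj) (negbTE ab).
  + rewrite s01 a1_1 => /esym/(arc_at_vertex e_wb It) [[]//|[_ /eqP]].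
    by rewrite eq_sym (negbTE (lift_neq b)).
- move=> x t /andP[t0 t1]; apply/eqP; rewrite /path_cat.
  have It : unit_itv t by apply/andP; split; lra.
  case: (lerP t 2^-1) => t2; last by apply/eqP/a2_avoid; apply/andP; split; lra.
  case/(arc_at_vertex e_aw (unit_itv_double It t2)) => -[t_0 x_eq].
    by move/eqP: t_0; rewrite mulf_eq0 pnatr_eq0 (gt_eqF t0).
  by move: (lift_neq x); rewrite x_eq eqxx.
Qed.

Lemma detour_meets_arc a b x y s t :
  e (L a) w -> e w (L b) -> e x y -> x != w -> y != w ->
  unit_itv s -> unit_itv t -> detour_arc a b s = arc x y t ->
  ((s == 0) || (s == 1)) && ((t == 0) || (t == 1)).
Proof.
move=> e_aw e_wb exy xw yw Is It; rewrite /detour_arc /path_cat.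
have distinct u v :
    u = w \/ v = w -> ~ ((u = x /\ v = y) \/ (u = y /\ v = x)).
  move=> uvw [][uE vE]; move: xw yw; rewrite -uE -vE;
    by case: uvw => ->; rewrite eqxx.
have flip u v : ~ ((u = x /\ v = y) \/ (u = y /\ v = x)) ->
    ~ ((x = u /\ y = v) \/ (x = v /\ y = u)).
  by move=> ne [][xE yE]; apply: ne; [left|right].
have avoid_w r : unit_itv r -> arc x y r <> pos w.
  move=> Ir /(arc_at_vertex exy Ir) [] [_ /eqP].
    by rewrite eq_sym (negbTE xw).
  by rewrite eq_sym (negbTE yw).
case: (lerP s 2^-1) => s2 /= st.
- have Is2 := unit_itv_double Is s2.
  have ne := distinct (L a) w (or_intror erefl); have ne' := flip _ _ ne.
  rewrite (arc_disjoint exy e_aw ne' It Is2 (esym st)) andbT.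
  case/orP: (arc_disjoint e_aw exy ne Is2 It st) => /eqP s_eq.
    by move/eqP: s_eq; rewrite mulf_eq0 pnatr_eq0 /= => ->.
  by move: st; rewrite s_eq; have [_ _ -> _ _] := arcP e_aw => /esym/avoid_w.
- have Is2 := unit_itv_double_sub1 Is s2.
  have ne := distinct w (L b) (or_introl erefl); have ne' := flip _ _ ne.
  rewrite (arc_disjoint exy e_wb ne' It Is2 (esym st)) andbT.
  case/orP: (arc_disjoint e_wb exy ne Is2 It st) => /eqP s_eq.
    by move: st; rewrite s_eq; have [_ -> _ _ _] := arcP e_wb => /esym/avoid_w.
  by apply/orP; right; apply/eqP; lra.
Qed.

Definition elim_arc a b :=
  if e (L a) (L b) then arc (L a) (L b) else detour_arc a b.

Lemma elim_arc_simple a b : elim_graph e w a b ->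
  [/\ {within @unit_itv R, continuous (elim_arc a b)}%classic,
      elim_arc a b 0 = pos (L a), elim_arc a b 1 = pos (L b),
      (forall s t, unit_itv s -> unit_itv t ->
         elim_arc a b s = elim_arc a b t -> s = t)
    & (forall x t, 0 < t < 1 -> elim_arc a b t != pos (L x))].
Proof.
case/andP=> ab; rewrite /elim_arc; case: ifP => [E _|_ /andP[e_aw e_wb]].
  by have [c a0 a1 a_inj a_avoid] := arcP E; split=> // x t /a_avoid.
exact: detour_arc_simple.
Qed.

Lemma elim_arc_disjoint a b a' b' :
  elim_graph e w a b -> elim_graph e w a' b' ->
  ~ ((a = a' /\ b = b') \/ (a = b' /\ b = a')) ->
  forall s t, unit_itv s -> unit_itv t -> elim_arc a b s = elim_arc a' b' t ->
  (s == 0) || (s == 1).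
Proof.
move=> /andP[ab hab] /andP[ab' hab'] ne s t Is It; rewrite /elim_arc.
have neL : ~ ((L a = L a' /\ L b = L b') \/ (L a = L b' /\ L b = L a')).
  by case=> -[/lift_inj a_eq /lift_inj b_eq]; apply: ne; [left|right].
case: ifP hab => [E _|_ /andP[e_aw e_wb]];
  case: ifP hab' => [E' _|_ /andP[e_aw' e_wb']] st.
- exact (arc_disjoint E E' neL Is It st).
- by case/andP: (detour_meets_arc e_aw' e_wb' E (lift_neq a) (lift_neq b) It Is (esym st)).
- by case/andP: (detour_meets_arc e_aw e_wb E' (lift_neq a') (lift_neq b') Is It st).
- have Na : L a \in [set y | e w y] by rewrite inE e_sym.
  have Na' : L a' \in [set y | e w y] by rewrite inE e_sym.
  have Nb : L b \in [set y | e w y] by rewrite inE.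
  have Nb' : L b' \in [set y | e w y] by rewrite inE.
  have Lab : L a != L b by rewrite (inj_eq lift_inj).
  exfalso; move: (card_le2_mem deg_w Lab Na Nb Na') (card_le2_mem deg_w Lab Na Nb Nb').
  rewrite !(inj_eq lift_inj).
  case/orP=> /eqP a'E /orP[] /eqP b'E; move: ab'; rewrite a'E b'E ?eqxx //.
  + by move=> _; apply: ne; left.
  + by move=> _; apply: ne; right.
Qed.

End Drawing.

Lemma planar_elim_graph : planar R e -> planar R (elim_graph e w).
Proof.
case=> pos [arc [pos_inj [arcP arc_disjoint]]].
exists (fun a => pos (L a)), (elim_arc arc); split; [|split].
- by move=> x y /pos_inj/lift_inj.
- exact (elim_arc_simple pos_inj arcP arc_disjoint).
- exact (elim_arc_disjoint pos_inj arcP arc_disjoint).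
Qed.
End PlanarElimGraph.

Definition edges (T : finType) (h : rel T) : {set T * T} := [set p | h p.1 p.2].

Lemma card_edges_at (T : finType) (h : rel T) w : symmetric h -> irreflexive h ->
  (2 * #|[set x | h w x]| <= #|[set p in edges h | (p.1 == w) || (p.2 == w)]|)%N.
Proof.
move=> h_sym h_irr; set N := [set x | h w x].
pose out_w := [set (w, x) | x in N]; pose in_w := [set (x, w) | x in N].
have disj : [disjoint out_w & in_w].
  rewrite -setI_eq0; apply/eqP/finset.setP => -[x y]; rewrite !inE.
  apply/negbTE/negP => /andP[/imsetP[u uN [-> ->]] /imsetP[v vN [_ uw]]].
  by move: uN; rewrite inE uw h_irr.
have out_inj : injective (fun x : T => (w, x)) by move=> x y [] ->.
have in_inj : injective (fun x : T => (x, w)) by move=> x y [] ->.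
rewrite mul2n -addnn -{1}(card_imset _ out_inj) -(card_imset _ in_inj).
have -> : (#|out_w| + #|in_w| = #|out_w :|: in_w|)%N.
  by apply/esym/eqP; rewrite (leq_card_setU _ _).2 disj.
apply/subset_leq_card/fintype.subsetP => p /setUP[] /imsetP[x]; rewrite inE => h_wx ->;
  by rewrite !inE /= ?[h x w]h_sym h_wx eqxx ?orbT.
Qed.

Lemma card_setX_offdiag (T : finType) (A : {set T}) :
  #|finset.setX A A :\: [set (x, x) | x in A]| = (#|A| * #|A| - #|A|)%N.
Proof.
rewrite cardsDS ?cardsX ?card_imset //; first by move=> x y /= [].
by apply/fintype.subsetP => p /imsetP[x xA ->]; rewrite inE /= xA.
Qed.

Section ElimGraph.
Variables (n : nat) (g : rel 'I_n.+1) (w : 'I_n.+1).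
Hypothesis g_sym : symmetric g.
Local Notation L := (lift w).

Lemma connect_elim_graph : (forall x y, connect g x y) ->
  forall a b, connect (elim_graph g w) a b.
Proof.
move=> g_conn a b.
(* vertices of the form [L c], or [w] with [L c] as neighbour, where [c] is reachable from [a] *)
pose reach := [pred x | [exists c, ((x == L c) || (x == w) && g w (L c))
                                    && connect (elim_graph g w) a c]].
have reach_step x y : g x y -> x \in reach -> y \in reach.
  move=> gxy /existsP[c /andP[/orP[/eqP xE | /andP[/eqP xE gwc]] ac]];
    rewrite {x}xE in gxy; apply/existsP.
  - case: (unliftP w y) gxy => [d ->|->] g_cy; last first.
      by exists c; rewrite eqxx -g_sym g_cy orbT.
    exists d; rewrite eqxx /=; have [<-//|cd] := eqVneq c d.
    by apply: connect_trans ac (connect1 _); rewrite /elim_graph cd g_cy.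
  - case: (unliftP w y) gxy => [d ->|->] g_wy; last by exists c; rewrite eqxx gwc orbT.
    exists d; rewrite eqxx /=; have [<-//|cd] := eqVneq c d.
    by apply: connect_trans ac (connect1 _); rewrite /elim_graph cd [g (L c) w]g_sym gwc g_wy orbT.
have reach_closed : fingraph.closed g reach.
  by move=> x y gxy; apply/idP/idP; apply: reach_step; rewrite // g_sym.
have : L a \in reach by apply/existsP; exists a; rewrite eqxx connect0.
rewrite (closed_connect reach_closed (g_conn _ (L b))).
case/existsP=> c /andP[/orP[/eqP/lift_inj-> //|]].
by rewrite eq_sym (negbTE (neq_lift w b)).
Qed.

Lemma card_edges_elim_graph : irreflexive g ->
  (0 < #|[set x | g w x]| <= 2)%N ->
  (#|edges (elim_graph g w)| + 2 <= #|edges g|)%N.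
Proof.
move=> g_irr /andP[deg_gt0 deg_le2]; set N := [set x | g w x].
pose at_w := [set p in edges g | (p.1 == w) || (p.2 == w)].
pose nbr_pairs := finset.setX N N :\: [set (x, x) | x in N].
pose LL (p : 'I_n * 'I_n) := (L p.1, L p.2).
have LL_inj : injective LL.
  move=> [a b] [c d] LLE; move: (congr1 fst LLE) (congr1 snd LLE) => /= ac bd.
  by rewrite (lift_inj ac) (lift_inj bd).
have image_sub : LL @: edges (elim_graph g w) \subset (edges g :\: at_w) :|: nbr_pairs.
  apply/fintype.subsetP => p /imsetP[[a b]]; rewrite inE /= => /andP[ab hab] ->.
  case/orP: hab => [g_ab | /andP[g_aw g_wb]].
    by rewrite !inE /= g_ab eq_sym (negbTE (neq_lift w a)) eq_sym (negbTE (neq_lift w b)).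
  rewrite !inE /= [g w (L a)]g_sym g_aw g_wb !andbT; apply/orP; right.
  apply/imsetP => -[x _ [ax bx]].
  by move: ab; rewrite -(inj_eq (@lift_inj _ w)) ax bx eqxx.
have card_at_w : (2 * #|N| <= #|at_w|)%N by exact: card_edges_at.
have card_nbr_pairs : #|nbr_pairs| = (#|N| * #|N| - #|N|)%N by exact: card_setX_offdiag.
have at_w_sub : at_w \subset edges g by apply/fintype.subsetP => p; rewrite inE => /andP[].
have := subset_leq_card image_sub; rewrite card_imset //.
move/leq_trans/(_ (leq_card_setU _ _).1).
rewrite cardsDS // card_nbr_pairs; have := subset_leq_card at_w_sub.
move: card_at_w deg_gt0 deg_le2.
(* Naming the cardinals makes [lia] see each of them as a single atom. *)
set E := #|edges g|; set E' := #|edges _|; set A := #|at_w|.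
by case: #|N| => [|[|[|d]]] //= at_w_ge _ _ at_w_le E'_le; lia.
Qed.

End ElimGraph.

Section SchurComplement.
Variable R : realType.
Implicit Types a b c d : R.

Lemma nzgraph_sym n (M : 'M[R]_n) : M^T = M -> symmetric (nzgraph M).
Proof. by move=> M_sym i j; rewrite /nzgraph eq_sym -{1}M_sym mxE. Qed.

Lemma nzgraph_irrefl n (M : 'M[R]_n) : irreflexive (nzgraph M).
Proof. by move=> i; rewrite /nzgraph eqxx. Qed.

Lemma nnz_offdiagE n (M : 'M[R]_n) : nnz_offdiag M = #|edges (nzgraph M)|.
Proof. by []. Qed.

Lemma row_offdegE n (M : 'M[R]_n) i : row_offdeg M i = #|[set j | nzgraph M i j]|.
Proof. by apply: eq_card => j; rewrite !inE eq_sym. Qed.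

Lemma irreducible_neighbour n (M : 'M[R]_n) i j : irreducible M -> i != j ->
  exists k, nzgraph M i k.
Proof.
move=> M_irr ij; have /connectP[[|k p] /= ] := M_irr i j.
  by move=> _ ji; move: ij; rewrite ji eqxx.
by case/andP=> ik _ _; exists k.
Qed.

Lemma SDDM0_diag_gt0 n (M : 'M[R]_n) i k : SDDM0 M -> nzgraph M i k -> 0 < M i i.
Proof.
case=> _ M_dom _ /andP[ik Mik]; apply: lt_le_trans (M_dom i).
rewrite (bigD1 k) 1?eq_sym //= ltr_pwDl ?normr_gt0 //.
by apply: sumr_ge0 => j _.
Qed.

Lemma det_schur_del n (M : 'M[R]_n.+1) v : M v v != 0 ->
  \det M = M v v * \det (schur_del M v).
Proof.
move=> Mvv_neq0.
(* [E *m M] subtracts from each row [x != v] the multiple of row [v] that clears [M x v]. *)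
pose c x := if x == v then 0 else M x v / M v v.
pose E : 'M[R]_n.+1 := 1%:M - \matrix_(x, y) ((y == v)%:R * c x).
have EM x y : (E *m M) x y = M x y - c x * M v y.
  rewrite mulmxBl mul1mx !mxE (bigD1 v) //= big1 ?addr0; first by rewrite mxE eqxx mul1r.
  by move=> k kv; rewrite mxE (negbTE kv) !mul0r.
have detE : \det E = 1.
  rewrite (expand_det_row _ v) (bigD1 v) //= big1 ?addr0; last first.
    by move=> k kv; rewrite !mxE (negbTE kv) eq_sym (negbTE kv) /c eqxx mulr0 subr0 mul0r.
  rewrite /cofactor; have -> : row' v (col' v E) = 1%:M.
    apply/matrixP => x y; rewrite !mxE (inj_eq lift_inj) [lift v y == v]eq_sym.
    by rewrite (negbTE (neq_lift v y)) mul0r subr0.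
  by rewrite det1 !mxE !eqxx /c eqxx mulr0 subr0 addnn -signr_odd odd_double !mulr1.
rewrite -[LHS]mul1r -detE -det_mulmx (expand_det_col _ v) (bigD1 v) //= big1 ?addr0.
  rewrite EM /c eqxx mul0r subr0 /cofactor addnn -signr_odd odd_double mul1r.
  congr (_ * \det _); apply/matrixP => x y; rewrite [LHS]mxE [LHS]mxE EM mxE.
  by rewrite /c eq_sym (negbTE (neq_lift v x)) mulrAC.
by move=> x xv; rewrite EM /c (negbTE xv) divfK // subrr mul0r.
Qed.

Lemma schur_entry_le0 a b c d : a <= 0 -> b <= 0 -> c <= 0 -> 0 < d ->
  a - b * c / d <= 0.
Proof.
move=> a0 b0 c0 d0; rewrite lerBlDr add0r (le_trans a0) //.
exact: divr_ge0 (mulr_le0 b0 c0) (ltW d0).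
Qed.

Lemma schur_entry_eq0 a b c d : a <= 0 -> b <= 0 -> c <= 0 -> 0 < d ->
  (a - b * c / d == 0) = (a == 0) && (b * c == 0).
Proof.
move=> a0 b0 c0 d0; have bcd0 := divr_ge0 (mulr_le0 b0 c0) (ltW d0).
by rewrite naddr_eq0 ?oppr_le0 // oppr_eq0 mulf_eq0 invr_eq0 (gt_eqF d0) orbF.
Qed.

Lemma schur_dominance a b c d sa sc : 0 < d -> 0 <= b -> 0 <= c ->
  b + sa <= a -> c + sc <= d -> sa + b / d * sc <= a - b * c / d.
Proof.
move=> d0 b0 c0 row_a row_d.
have q0 : 0 <= b / d by rewrite divr_ge0 // ltW.
have qd : b / d * d = b by rewrite divfK // gt_eqF.
have -> : b * c / d = b / d * c by rewrite mulrAC.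
move: q0 qd; set q := b / d => q0 qd; nra.
Qed.

Lemma sum_lift_neq n (F : 'I_n.+1 -> R) v k :
  \sum_(j < n.+1 | j != lift v k) F j = F v + \sum_(l < n | l != k) F (lift v l).
Proof.
rewrite (bigD1_ord v) ?neq_lift //=.
by congr (_ + _); apply: eq_bigl => l; rewrite (inj_eq lift_inj).
Qed.

Lemma sum_lift n (F : 'I_n.+1 -> R) v :
  \sum_(j < n.+1 | j != v) F j = \sum_(l < n) F (lift v l).
Proof.
have : \sum_(j < n.+1) F j = F v + \sum_(l < n) F (lift v l) by rewrite (bigD1_ord v).
by rewrite (bigD1 v) //= => /addrI.
Qed.

Section SDDM0Schur.
Variables (n : nat) (M : 'M[R]_n.+1) (v : 'I_n.+1).
Hypotheses (M_SDDM0 : SDDM0 M) (Mvv_gt0 : 0 < M v v).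
Local Notation L := (lift v).

Let M_sym i j : M i j = M j i.
Proof. by case: M_SDDM0 => M_sym _ _; rewrite -{1}M_sym mxE. Qed.

Let M_offdiag i j : i != j -> M i j <= 0.
Proof. by case: M_SDDM0 => _ _; apply. Qed.

Let M_Lv k : M (L k) v <= 0.
Proof. by apply: M_offdiag; rewrite eq_sym neq_lift. Qed.

Let M_vL k : M v (L k) <= 0.
Proof. by apply: M_offdiag; rewrite neq_lift. Qed.

Lemma nzgraph_schur_del : nzgraph (schur_del M v) =2 elim_graph (nzgraph M) v.
Proof.
move=> k l; rewrite /nzgraph /elim_graph (inj_eq lift_inj).
have [//|kl] := eqVneq k l; rewrite mxE schur_entry_eq0 ?M_Lv ?M_vL //; last first.
  by rewrite M_offdiag // (inj_eq lift_inj).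
by rewrite [L k == v]eq_sym !neq_lift mulf_eq0 negb_and negb_or.
Qed.

Lemma SDDM0_schur_del : SDDM0 (schur_del M v).
Proof.
split.
- apply/matrixP => k l; rewrite !mxE.
  by rewrite (M_sym (L l)) (M_sym (L l) v) (M_sym v (L k)) [M v _ * _]mulrC.
- move=> k; set b := `|M (L k) v|.
  have S_abs l : l != k ->
      `|schur_del M v k l| = `|M (L k) (L l)| + b * `|M v (L l)| / M v v.
    move=> lk; have Llk : L l != L k by rewrite (inj_eq lift_inj).
    rewrite mxE ler0_norm ?schur_entry_le0 ?M_Lv ?M_vL ?M_offdiag 1?eq_sym //.
    by rewrite /b !ler0_norm ?M_Lv ?M_vL ?M_offdiag 1?eq_sym //; ring.
  rewrite (eq_bigr _ S_abs) big_split /=.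
  under [X in _ + X]eq_bigr do rewrite mulrAC.
  rewrite -mulr_sumr [schur_del M v k k]mxE.
  have -> : M (L k) v * M v (L k) = b * `|M v (L k)|.
    by rewrite /b !ler0_norm ?M_Lv ?M_vL // mulrNN.
  have [_ M_dom _] := M_SDDM0.
  have row_k := M_dom (L k); rewrite sum_lift_neq in row_k.
  have row_v := M_dom v; rewrite sum_lift (bigD1 k) //= in row_v.
  exact: schur_dominance Mvv_gt0 (normr_ge0 _) (normr_ge0 _) row_k row_v.
- by move=> k l kl; rewrite mxE schur_entry_le0 ?M_Lv ?M_vL ?M_offdiag ?(inj_eq lift_inj).
Qed.

End SDDM0Schur.

End SchurComplement.

Section Elimination.
Variable R : realType.

Lemma planar_ord0 (e : rel 'I_0) : planar R e.
Proof.
exists (fun _ => (0, 0)), (fun _ _ _ => (0, 0)).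
by split; [case | split; case].
Qed.

Lemma schur_del_step n (M : 'M[R]_n.+2) v :
  SDDM0 M -> irreducible M -> (row_offdeg M v <= 2)%N ->
  [/\ SDDM0 (schur_del M v), irreducible (schur_del M v),
      singular (schur_del M v) <-> singular M,
      (nnz_offdiag (schur_del M v) + 2 <= nnz_offdiag M)%N
    & planar R (nzgraph M) -> planar R (nzgraph (schur_del M v))].
Proof.
move=> M_SDDM0 M_irr deg_v; have [M_sym _ _] := M_SDDM0.
have [k vk] := irreducible_neighbour M_irr (neq_lift v ord0).
have Mvv_gt0 := SDDM0_diag_gt0 M_SDDM0 vk.
have graphE : nzgraph (schur_del M v) = elim_graph (nzgraph M) v.
  by apply/funext => a; apply/funext => b; exact: nzgraph_schur_del.
have deg_v' : (0 < #|[set x | nzgraph M v x]| <= 2)%N.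
  by rewrite -row_offdegE deg_v andbT row_offdegE; apply/card_gt0P; exists k; rewrite inE.
split.
- exact: SDDM0_schur_del.
- by rewrite /irreducible graphE; apply: connect_elim_graph (nzgraph_sym M_sym) M_irr.
- rewrite /singular (det_schur_del (lt0r_neq0 Mvv_gt0)).
  by split=> [->|/eqP]; rewrite ?mulr0 // mulf_eq0 (gt_eqF Mvv_gt0) => /eqP.
- rewrite !nnz_offdiagE graphE.
  exact: card_edges_elim_graph (nzgraph_sym M_sym) (@nzgraph_irrefl _ _ M) deg_v'.
- rewrite graphE; apply: planar_elim_graph (nzgraph_sym M_sym) _.
  by case/andP: deg_v'.
Qed.

(* The count needs the guard [0 < m]: deleting a final [1 x 1] matrix removes no entry. *)
Definition elim_inv n (B : 'M[R]_n) (s : smat R) : Prop :=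
  let: existT m M := s in
  ((0 < m)%N -> [/\ SDDM0 M, irreducible M, singular M <-> singular B
                  & (nnz_offdiag M + 2 * n <= nnz_offdiag B + 2 * m)%N])
  /\ (planar R (nzgraph B) -> planar R (nzgraph M)).

Lemma elim_inv_step n (B : 'M[R]_n) s t : elim_step s t -> elim_inv B s -> elim_inv B t.
Proof.
case=> m M v deg_v [inv planar_inv].
have [M_SDDM0 M_irr M_sing M_nnz] := inv isT.
case: m => [|m] in M v deg_v inv planar_inv M_SDDM0 M_irr M_sing M_nnz *.
  by split=> // _; apply: planar_ord0.
have [S_SDDM0 S_irr S_sing S_nnz S_planar] := schur_del_step M_SDDM0 M_irr deg_v.
split=> [_|/planar_inv/S_planar //]; split=> //; first by rewrite S_sing.
by lia.
Qed.

Lemma elim_inv_rt n (B : 'M[R]_n) s t :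
  clos_refl_trans _ (@elim_step R) s t -> elim_inv B s -> elim_inv B t.
Proof.
elim=> [x y xy | x | x y z _ IHxy _ IHyz]; first exact: elim_inv_step.
  by [].
by move/IHxy/IHyz.
Qed.

Lemma nnz_offdiag_row_offdeg n (M : 'M[R]_n) :
  nnz_offdiag M = (\sum_i row_offdeg M i)%N.
Proof.
rewrite /nnz_offdiag /row_offdeg -sum1_card big_mkcond /=.
under [RHS]eq_bigr do rewrite -sum1_card big_mkcond /=.
by rewrite pair_big /=; apply: eq_bigr => -[i j] _; rewrite !inE /= eq_sym.
Qed.

Lemma elim_final_nnz n (M : 'M[R]_n) : elim_final M -> (3 * n <= nnz_offdiag M)%N.
Proof.
move=> M_final; rewrite nnz_offdiag_row_offdeg.
have -> : (3 * n = \sum_(i < n) 3)%N by rewrite sum_nat_const card_ord mulnC.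
by apply: leq_sum => i _; exact: M_final.
Qed.

Lemma nnz_offdiag_upper n (M : 'M[R]_n) : M^T = M ->
  nnz_offdiag M = (2 * nnz_upper M)%N.
Proof.
move=> M_sym.
pose U := [set p : 'I_n * 'I_n | (p.1 < p.2)%N && (M p.1 p.2 != 0)].
pose swap (p : 'I_n * 'I_n) := (p.2, p.1).
have swapK : involutive swap by case.
rewrite /nnz_offdiag.
have -> : [set p : 'I_n * 'I_n | (p.1 != p.2) && (M p.1 p.2 != 0)] = U :|: swap @^-1: U.
  apply/finset.setP => -[a b]; have Mba : M b a = M a b by rewrite -{1}M_sym mxE.
  by rewrite !inE /= Mba neq_ltn andb_orl.
have U_swapU : U :&: swap @^-1: U = finset.set0.
  by apply/finset.setP => -[a b]; rewrite !inE /=; case: ltngtP; rewrite ?andbF.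
rewrite cardsU card_preimset; last exact: inv_inj swapK.
by rewrite U_swapU cards0 subn0 addnn mul2n.
Qed.

End Elimination.

Theorem proposition4p1 (R : realType) (n : nat) (B : 'M[R]_n) (j : int)
    (n1 : nat) (A1 : 'M[R]_n1) :
  SDDM0 B -> irreducible B ->
  (nnz_upper B)%:Z = n%:Z - 1 + j ->
  elim_result B A1 ->
  [/\ ((1 <= n1)%N ->
         [/\ SDDM0 A1, irreducible A1 & (singular A1 <-> singular B)]),
      (planar R (nzgraph B) -> planar R (nzgraph A1))
    & ((1 <= n1)%N ->
         n1%:Z <= 2 * j - 2 /\
         (nnz_offdiag A1)%:Z <= 2 * (3 * j - 3))].
Proof.
move=> B_SDDM0 B_irr B_upper [B_A1 A1_final]; have [B_sym _ _] := B_SDDM0.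
have B_inv : elim_inv B (existT _ n B) by split=> // _; split.
have [A1_inv A1_planar] := elim_inv_rt B_A1 B_inv.
split=> // n1_gt0; have [A1_SDDM0 A1_irr A1_sing A1_nnz] := A1_inv n1_gt0.
  by split.
have := elim_final_nnz A1_final; move: A1_nnz B_upper.
rewrite (nnz_offdiag_upper B_sym); lia.
Qed.
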